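(* Let $\tau=\tau_1\dotsm\tau_l$ be a weak composition with $l\ge 3$ and $\tau_1,\tau_2\ge 1$, and let $(G_1,u_1),\dots,(G_l,u_l)$ be rooted graphs. Let $G=S^\tau(G_1,\dots,G_l)$, and let $H=S^{\tau_3\dotsm\tau_l}(G_3,\dots,G_l)$, regarded as a rooted graph whose root is its center. Then \[ X_G=X_{S^{(\tau_1-1)\tau_2 1}(G_1,\,G_2,\,H)}+X_{G_1^{\tau_1-1}}\,X_{S^{\tau_2\dotsm\tau_l}(G_2,\dots,G_l)}-X_{P^{\tau_1+\tau_2-1}(G_1,G_2)}\,X_H. \]
   Context: All graphs are finite simple graphs. The chromatic symmetric function of a graph $G$ is $X_G=\sum_{\kappa}\prod_{v\in V(G)}x_{\kappa(v)}$, where $\kappa$ ranges over proper colorings $\kappa:V(G)\to\{1,2,\dots\}$. For a weak composition (sequence of nonnegative integers) $\tau=\tau_1\dotsm\tau_l$ and rooted graphs $(G_i,u_i)$, the spider-conjoined graph $S^\tau(G_1,\dots,G_l)$ is obtained as follows: take a center vertex $c$ and $l$ paths starting at $c$, pairwise disjoint except at $c$, the $i$-th of length $\tau_i$ with other end $s_i$ (so $s_i=c$ if $\tau_i=0$); then identify $u_i$ with $s_i$ for all $i$ (the $G_i$ being disjoint). Its center is $c$. For rooted graphs $(G,u)$, $(H,v)$ and $k\ge0$, $P^k(G,H)$ is obtained from the disjoint union of $G$ and $H$ by adding a path of length $k$ joining $u$ and $v$ (for $k=0$ identifying them), and $G^k=P^k(G,K_1)$ is $G$ with a pendant path of length $k$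 at its root. *)

From HB Require Import structures.
From mathcomp Require Import all_boot all_order all_algebra.
From mathcomp Require Import mpoly.

Set Implicit Arguments.
Unset Strict Implicit.
Unset Printing Implicit Defensive.

Import GRing.Theory.
Local Open Scope ring_scope.

Record graph := Graph {
  vert : finType;
  adj : rel vert;
  adj_sym : ssrbool.symmetric adj;
  adj_irr : irreflexive adj }.

Definition mk_adj (V : finType) (r : rel V) : rel V :=
  fun x y => (x != y) && (r x y || r y x).

Lemma mk_adj_sym (V : finType) (r : rel V) : ssrbool.symmetric (mk_adj r).
Proof. by move=> x y; rewrite /mk_adj eq_sym orbC. Qed.

Lemma mk_adj_irr (V : finType) (r : rel V) : irreflexive (mk_adj r).
Proof. by move=> x; rewrite /mk_adj eqxx. Qed.

Definition mkGraph (V : finType) (r : rel V) : graph :=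
  @Graph V (mk_adj r) (@mk_adj_sym V r) (@mk_adj_irr V r).

Record rooted_graph := RGraph { rg :> graph; root : vert rg }.

Definition path_graph (k : nat) : graph :=
  @mkGraph 'I_k.+1 (fun i j => i.+1 == j :> nat).

Definition K1 : rooted_graph := @RGraph (path_graph 0) (@ord0 0).

(* Glue G and H by identifying a : vert G with b : vert H
   (the graphs being disjoint).  Vertices: those of G, and those of H
   other than b (b being represented by a). *)
Definition glue_raw (G : graph) (a : vert G) (H : graph) (b : vert H) :
    rel (vert G + {y : vert H | y != b})%type :=
  fun x y => match x, y with
  | inl x, inl y => adj x y
  | inr x, inr y => adj (val x) (val y)
  | inl x, inr y => (x == a) && adj b (val y)
  | inr _, inl _ => false
  end.

Definition glue (G : graph) (a : vert G) (H : graph) (b : vert H) : graph :=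
  @mkGraph (vert G + {y : vert H | y != b})%type (@glue_raw G a H b).

Definition glue_l (G : graph) (a : vert G) (H : graph) (b : vert H)
  (x : vert G) : vert (glue a b) := inl x.
Arguments glue_l {G} a {H} b x.

Definition glue_r (G : graph) (a : vert G) (H : graph) (b : vert H)
  (y : vert H) : vert (glue a b) :=
  match insub y with Some y' => inr y' | None => inl a end.
Arguments glue_r {G} a {H} b y.

(* Leg of a spider: path of length k from the (future) center, with
   (G,u) attached by identifying u with the far end; rooted at the
   path end that becomes the center. *)
Definition path_end (k : nat) : vert (path_graph k) := @ord_max k.
Definition path_start (k : nat) : vert (path_graph k) := @ord0 k.

Definition leg (k : nat) (R : rooted_graph) : rooted_graph :=
  @RGraph (glue (path_end k) (root R)) (glue_l (path_end k) (root R) (path_start k)).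

Definition wedge (S L : rooted_graph) : rooted_graph :=
  @RGraph (glue (root S) (root L)) (glue_l (root S) (root L) (root S)).

(* Spider-conjoined graph S^tau(G_1,...,G_l), given as the list of pairs
   (tau_i, (G_i,u_i)); rooted at its center. *)
Definition spider (legs : seq (nat * rooted_graph)) : rooted_graph :=
  foldl (fun S p => wedge S (leg p.1 p.2)) K1 legs.

(* P^k(G,H): G and H joined by a path of length k between their roots. *)
Definition Pk (k : nat) (G H : rooted_graph) : graph :=
  glue (glue_r (root G) (path_start k) (path_end k)) (root H).

Definition pend (G : rooted_graph) (k : nat) : graph := Pk k G K1.

Definition proper (G : graph) (n : nat) (k : {ffun vert G -> 'I_n}) : bool :=
  [forall x, forall y, adj x y ==> (k x != k y)].

Definition chrom (n : nat) (G : graph) : {mpoly int[n]} :=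
  \sum_(k : {ffun vert G -> 'I_n} | proper k) \prod_(v : vert G) 'X_(k v).

From Pilot Require Import Defs.
From HB Require Import structures.
From mathcomp Require Import all_boot all_order all_algebra.
From mathcomp Require Import mpoly.
From mathcomp Require Import ring zify.
Import GRing.Theory.
Set Implicit Arguments.
Unset Strict Implicit.
Unset Printing Implicit Defensive.
Local Open Scope ring_scope.

(** For a graph [G] with a vertex [r], let [F_r(i)] be the sum, over the proper
    colourings giving [r] the colour [i], of the colouring's monomial with the
    factor of [r] left out; then [X_G = sum_i x_i F_r(i)].  Identifying the roots
    of two rooted graphs multiplies these functions pointwise, and attaching a
    path of length [k] at the root applies [k] times the operator
    [(D f)(j) = sum_(c <> j) x_c f(c)].  So every graph in the statement has
    [X = <product of the D^(tau_i) F_(G_i)>], where [<f> = sum_i x_i f(i)];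
    likewise [X_(P^k(G,H)) = <F_G * D^k F_H>], and [D] is self-adjoint for
    [(f, g) |-> <f * g>].  As [(D f)(j) = <f> - x_j f(j)],
    the proposition reduces to the identity
    [<DA * B * h> = <A * B * Dh> + <A> <B * h> - <A * B> <h>]. *)

Lemma big_neq_sig (T : Type) (idx : T) (op : Monoid.com_law idx) (V : finType)
    (b : V) (F : V -> T) :
  \big[op/idx]_(v | v != b) F v = \big[op/idx]_(v : {v : V | v != b}) F (val v).
Proof.
rewrite (reindex_omap (val : {v : V | v != b} -> V) insub); last first.
  by move=> v bv; rewrite insubT.
apply: eq_bigl => -[v bv] /=; rewrite bv insubT /=.
by apply/eqP; congr Some; apply: val_inj.
Qed.

Section Chromatic.
Variable n : nat.
Local Notation R := {mpoly int[n]}.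
Local Notation col V := {ffun V -> 'I_n}.

Definition weight (V : finType) (k : col V) : R := \prod_v 'X_(k v).

Definition weight_but (V : finType) (r : V) (k : col V) : R :=
  \prod_(v | v != r) 'X_(k v).

Lemma weightE (V : finType) (r : V) (k : col V) :
  weight k = 'X_(k r) * weight_but r k.
Proof. by rewrite /weight (bigD1 r). Qed.

Definition xsum (f : 'I_n -> R) : R := \sum_i 'X_i * f i.

Lemma eq_xsum (f g : 'I_n -> R) : f =1 g -> xsum f = xsum g.
Proof. by move=> fg; apply: eq_bigr => i _; rewrite fg. Qed.

Definition rchrom (G : graph) (r : vert G) (i : 'I_n) : R :=
  \sum_(k : col (vert G) | Defs.proper k && (k r == i)) weight_but r k.

Definition transfer (G : graph) (r y : vert G) (g : 'I_n -> R) (i : 'I_n) : R :=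
  \sum_(k : col (vert G) | Defs.proper k && (k r == i)) weight_but r k * g (k y).

Lemma properP (G : graph) (k : col (vert G)) :
  reflect (forall x y, adj x y -> k x != k y) (Defs.proper k).
Proof.
apply: (iffP forallP) => [P x y|P x].
  by move/forallP: (P x) => /(_ y) /implyP.
by apply/forallP => y; apply/implyP; exact: P.
Qed.

Lemma adj_neq (G : graph) (x y : vert G) : adj x y -> x != y.
Proof. by apply: contraTneq => ->; rewrite adj_irr. Qed.

Lemma sum_proper_root (G : graph) (r : vert G) (h : 'I_n -> R) :
  \sum_(k : col (vert G) | Defs.proper k) weight k * h (k r) =
  xsum (rchrom r \* h).
Proof.
rewrite /xsum (partition_big (fun k : col (vert G) => k r) predT) //=.
apply: eq_bigr => i _; rewrite /rchrom mulr_suml mulr_sumr.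
by apply: eq_bigr => k /andP[_ /eqP <-]; rewrite (weightE r) mulrA.
Qed.

Lemma chrom_rchrom (G : graph) (r : vert G) : chrom n G = xsum (rchrom r).
Proof.
transitivity (xsum (rchrom r \* fun=> 1)).
  by rewrite -sum_proper_root; apply: eq_bigr => k _; rewrite mulr1.
by apply: eq_xsum => i /=; rewrite mulr1.
Qed.

Section Glue.
Variables (G H : graph) (a : vert G) (b : vert H).
Local Notation GH := (glue a b).

Definition col_l (k : col (vert GH)) : col (vert G) := [ffun x => k (glue_l a b x)].
Definition col_r (k : col (vert GH)) : col (vert H) := [ffun y => k (glue_r a b y)].
Definition col_join (k1 : col (vert G)) (k2 : col (vert H)) : col (vert GH) :=
  [ffun v : (vert G + {y : vert H | y != b})%type =>
     match v with inl x => k1 x | inr y => k2 (val y) end].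

Lemma glue_r_val (y : {y : vert H | y != b}) : glue_r a b (val y) = inr y.
Proof. by rewrite /glue_r valK. Qed.

Lemma glue_r_root : glue_r a b b = glue_l a b a.
Proof. by rewrite /glue_r insubF // eqxx. Qed.

Lemma col_join_r (k1 : col (vert G)) (k2 : col (vert H)) y :
  k2 b = k1 a -> col_join k1 k2 (glue_r a b y) = k2 y.
Proof.
move=> k21; rewrite /glue_r; case: insubP => [y' _ <-|]; rewrite ffunE //.
by move/negbNE/eqP ->.
Qed.

Lemma col_l_join (k1 : col (vert G)) (k2 : col (vert H)) :
  col_l (col_join k1 k2) = k1.
Proof. by apply/ffunP => x; rewrite !ffunE. Qed.

Lemma col_r_join (k1 : col (vert G)) (k2 : col (vert H)) :
  k2 b = k1 a -> col_r (col_join k1 k2) = k2.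
Proof. by move=> k21; apply/ffunP => y; rewrite ffunE col_join_r. Qed.

Lemma col_joinK (k : col (vert GH)) : col_join (col_l k) (col_r k) = k.
Proof. by apply/ffunP => -[x|y]; rewrite !ffunE // glue_r_val. Qed.

Lemma sum_glue (Phi : col (vert GH) -> R) :
  \sum_k Phi k =
  \sum_(k1 : col (vert G)) \sum_(k2 : col (vert H) | k2 b == k1 a)
     Phi (col_join k1 k2).
Proof.
rewrite pair_big_dep /= [LHS](reindex_onto
  (fun p : col (vert G) * col (vert H) => col_join p.1 p.2)
  (fun k => (col_l k, col_r k))) /=; last by move=> k _; rewrite col_joinK.
apply: eq_bigl => -[k1 k2] /=; rewrite xpair_eqE col_l_join eqxx /=.
apply/eqP/eqP => [<-|/col_r_join //].
by rewrite ffunE glue_r_root ffunE.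
Qed.

Lemma glue_r_adj x y : adj x y -> adj (glue_r a b x) (glue_r a b y).
Proof.
move=> xy; rewrite /glue_r.
case: insubP => [x' _ vx|/negbNE/eqP ex]; case: insubP => [y' _ vy|/negbNE/eqP ey];
  rewrite /= /mk_adj /=.
- rewrite -vx -vy in xy; rewrite xy andbT.
  by apply/eqP => -[e]; move: xy; rewrite e adj_irr.
- by rewrite ey -vx in xy; rewrite eqxx /= adj_sym xy.
- by rewrite ex -vy in xy; rewrite eqxx /= xy.
- by move: xy; rewrite ex ey adj_irr.
Qed.

Lemma proper_col_join (k1 : col (vert G)) (k2 : col (vert H)) :
  k2 b = k1 a ->
  Defs.proper (col_join k1 k2) = Defs.proper k1 && Defs.proper k2.
Proof.
move=> k21; apply/properP/andP => [P|[/properP P1 /properP P2]].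
  split; apply/properP => x y xy.
    have := P (inl x) (inl y); rewrite !ffunE; apply.
    by rewrite /= /mk_adj /= xy andbT (adj_neq xy).
  by have := P _ _ (glue_r_adj xy); rewrite !col_join_r.
move=> [x|x] [y|y]; rewrite /= /mk_adj /= !ffunE.
- by move=> /andP[_]; rewrite (adj_sym y x) orbb; exact: P1.
- by rewrite orbF => /andP[/eqP -> ay]; rewrite -k21; exact: P2.
- by move=> /andP[/eqP -> ay]; rewrite -k21 eq_sym; exact: P2.
- by move=> /andP[_]; rewrite (adj_sym (val y)) orbb; exact: P2.
Qed.

Lemma weight_glue (k : col (vert GH)) :
  weight k = weight (col_l k) * weight_but b (col_r k).
Proof.
rewrite /weight /weight_but big_sumType (big_neq_sig _ b) /=.
by congr (_ * _); apply: eq_bigr => y _; rewrite ffunE ?glue_r_val.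
Qed.

Lemma weight_but_glue_l v (k : col (vert GH)) :
  weight_but (glue_l a b v) k = weight_but v (col_l k) * weight_but b (col_r k).
Proof.
rewrite /weight_but big_sumType (big_neq_sig _ b) /=.
by congr (_ * _); apply: eq_bigr => y _; rewrite ffunE ?glue_r_val.
Qed.

Lemma sum_proper_glue (phi : col (vert G) -> R) (psi : col (vert H) -> R) :
  \sum_(k : col (vert GH) | Defs.proper k) phi (col_l k) * psi (col_r k) =
  \sum_(k1 : col (vert G) | Defs.proper k1)
     phi k1 * \sum_(k2 : col (vert H) | Defs.proper k2 && (k2 b == k1 a)) psi k2.
Proof.
rewrite big_mkcond sum_glue [RHS]big_mkcond; apply: eq_bigr => k1 _.
transitivity (\sum_(k2 : col (vert H) | k2 b == k1 a)
   (if Defs.proper k1 && Defs.proper k2 then phi k1 * psi k2 else 0)).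
  apply: eq_bigr => k2 /eqP k21.
  by rewrite proper_col_join // col_l_join col_r_join.
case: (Defs.proper k1); last by rewrite big1.
rewrite mulr_sumr big_mkcond [RHS]big_mkcond; apply: eq_bigr => k2 _ /=.
by case: (k2 b == k1 a); case: (Defs.proper k2).
Qed.

Lemma chrom_glue :
  chrom n GH = \sum_(k1 : col (vert G) | Defs.proper k1) weight k1 * rchrom b (k1 a).
Proof.
rewrite -sum_proper_glue; apply: eq_bigr => k _.
by rewrite -weight_glue.
Qed.

Lemma rchrom_glue_l v i :
  rchrom (glue_l a b v) i =
  \sum_(k1 : col (vert G) | Defs.proper k1 && (k1 v == i))
     weight_but v k1 * rchrom b (k1 a).
Proof.
pose phi (k1 : col (vert G)) := if k1 v == i then weight_but v k1 else 0.
rewrite /rchrom big_mkcondr.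
transitivity (\sum_(k | Defs.proper k) phi (col_l k) * weight_but b (col_r k)).
  apply: eq_bigr => k _; rewrite /phi ffunE weight_but_glue_l.
  by case: ifP; rewrite ?mul0r.
rewrite sum_proper_glue [RHS]big_mkcondr; apply: eq_bigr => k1 _.
by rewrite /phi; case: ifP; rewrite ?mul0r.
Qed.

Lemma sum_proper_glue_r y (h : 'I_n -> R) :
  \sum_(k : col (vert GH) | Defs.proper k) weight k * h (k (glue_r a b y)) =
  \sum_(k1 : col (vert G) | Defs.proper k1) weight k1 * transfer b y h (k1 a).
Proof.
rewrite -(sum_proper_glue _ (fun k2 => weight_but b k2 * h (k2 y))).
by apply: eq_bigr => k _; rewrite weight_glue ffunE mulrA.
Qed.

End Glue.

Definition step (f : 'I_n -> R) (j : 'I_n) : R := \sum_(c | c != j) 'X_c * f c.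

Lemma stepE (f : 'I_n -> R) j : step f j = xsum f - 'X_j * f j.
Proof. by rewrite /xsum (bigD1 j) //= addrC addrK. Qed.

Lemma xsum_step_mulE (f g : 'I_n -> R) :
  xsum (step f \* g) = xsum f * xsum g - \sum_i 'X_i * 'X_i * (f i * g i).
Proof.
rewrite [xsum g]/xsum mulr_sumr [LHS]/xsum -sumrB.
by apply: eq_bigr => i _ /=; rewrite stepE; ring.
Qed.

Lemma xsum_mul_step (f g : 'I_n -> R) : xsum (f \* step g) = xsum (step f \* g).
Proof.
have -> : xsum (f \* step g) = xsum (step g \* f).
  by apply: eq_xsum => i /=; rewrite mulrC.
rewrite !xsum_step_mulE mulrC; congr (_ - _).
by apply: eq_bigr => i _; rewrite (mulrC (g i)).
Qed.

Lemma xsum_mul_iter_step m (f g : 'I_n -> R) :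
  xsum (f \* iter m step g) = xsum (iter m step f \* g).
Proof.
elim: m f => [|m IH] f //=.
by rewrite xsum_mul_step IH -iterSr.
Qed.

Lemma xsum_step_mul3 (A B h : 'I_n -> R) :
  xsum (step A \* B \* h) =
  xsum (A \* B \* step h) + xsum A * xsum (B \* h) - xsum (A \* B) * xsum h.
Proof.
have -> : xsum (step A \* B \* h) = xsum (step A \* (B \* h)).
  by apply: eq_xsum => i /=; rewrite mulrA.
have -> : xsum (A \* B \* step h) = xsum (step h \* (A \* B)).
  by apply: eq_xsum => i /=; rewrite mulrC.
rewrite !xsum_step_mulE.
have -> : \sum_i 'X_i * 'X_i * (h i * (A \* B) i) =
          \sum_i 'X_i * 'X_i * (A i * (B \* h) i).
  by apply: eq_bigr => i _ /=; ring.
ring.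
Qed.

Lemma properP_path k (l : col (vert (path_graph k))) :
  Defs.proper l = [forall i : 'I_k, l (widen_ord (leqnSn k) i) != l (lift ord0 i)].
Proof.
apply/properP/forallP => [Pl i|Pl].
  apply: Pl; rewrite /= /mk_adj /= -val_eqE /= /bump leq0n add1n eqxx andbT.
  by apply/eqP; lia.
have succ_neq (x y : 'I_k.+1) : x.+1 = y :> nat -> l x != l y.
  move=> xy; have xk : (x < k)%N by have := ltn_ord y; lia.
  have -> : x = widen_ord (leqnSn k) (Ordinal xk) by apply: val_inj.
  have -> : y = lift ord0 (Ordinal xk) by apply: val_inj; rewrite /= /bump leq0n add1n.
  exact: Pl.
move=> x y; rewrite /= /mk_adj /= => /andP[_ /orP[/eqP xy|/eqP yx]].
  exact: succ_neq.
by rewrite eq_sym; exact: succ_neq.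
Qed.

Definition col_cons k (c : 'I_n) (l : col 'I_k.+1) : col 'I_k.+2 :=
  [ffun j => if unlift ord0 j is Some j' then l j' else c].

Lemma col_cons0 k c (l : col 'I_k.+1) : col_cons c l ord0 = c.
Proof. by rewrite ffunE unlift_none. Qed.

Lemma col_consS k c (l : col 'I_k.+1) j : col_cons c l (lift ord0 j) = l j.
Proof. by rewrite ffunE liftK. Qed.

Lemma sum_col_cons k (Phi : col 'I_k.+2 -> R) :
  \sum_l Phi l = \sum_c \sum_l Phi (col_cons c l).
Proof.
rewrite pair_big /= [LHS](reindex (fun p : 'I_n * col 'I_k.+1 => col_cons p.1 p.2)) //.
apply: onW_bij.
exists (fun l : col 'I_k.+2 => (l ord0, [ffun j => l (lift ord0 j)])).
  move=> [c l] /=; rewrite col_cons0; congr (_, _).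
  by apply/ffunP => j; rewrite ffunE col_consS.
move=> l; apply/ffunP => j; rewrite ffunE.
by case: unliftP => [j' ->|->]; rewrite ?ffunE.
Qed.

Lemma proper_col_cons k c (l : col 'I_k.+1) :
  Defs.proper (col_cons c l : col (vert (path_graph k.+1))) =
  (c != l ord0) && Defs.proper (l : col (vert (path_graph k))).
Proof.
rewrite !properP_path.
have w0 : widen_ord (leqnSn k.+1) (ord0 : 'I_k.+1) = ord0 :> 'I_k.+2 by apply: val_inj.
have wS (j : 'I_k) : widen_ord (leqnSn k.+1) (lift ord0 j) =
                     lift ord0 (widen_ord (leqnSn k) j) by apply: val_inj.
apply/forallP/andP => [Pl|[Pl0 /forallP Pl] i].
  split; first by have := Pl ord0; rewrite w0 col_cons0 col_consS.
  by apply/forallP => j; have := Pl (lift ord0 j); rewrite wS !col_consS.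
case: (unliftP ord0 i) => [j ->|->]; first by rewrite wS !col_consS.
by rewrite w0 col_cons0 col_consS.
Qed.

Lemma weight_but_col_cons k c (l : col 'I_k.+1) :
  weight_but ord0 (col_cons c l) = weight l.
Proof.
rewrite /weight_but /weight big_mkcond big_ord_recl /= mul1r.
by apply: eq_bigr => j _; rewrite col_consS.
Qed.

Lemma transfer_path0 (g : 'I_n -> R) i :
  transfer (path_start 0) (path_end 0) g i = g i.
Proof.
have proper0 (l : col (vert (path_graph 0))) : Defs.proper l.
  by rewrite properP_path; apply/forallP => -[].
rewrite /transfer (big_pred1 [ffun=> i]); last first.
  move=> l; rewrite proper0 /=; apply/eqP/eqP => [li|->]; last by rewrite ffunE.
  by apply/ffunP => x; rewrite ffunE (ord1 x).
rewrite ffunE /weight_but big_pred0 ?mul1r // => v.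
by rewrite (ord1 v) eqxx.
Qed.

Lemma transfer_pathS k (g : 'I_n -> R) i :
  transfer (path_start k.+1) (path_end k.+1) g i =
  step (transfer (path_start k) (path_end k) g) i.
Proof.
have endS : path_end k.+1 = lift ord0 (path_end k) by apply: val_inj.
rewrite /transfer big_mkcond sum_col_cons (bigD1 i) //= [X in _ + X]big1 ?addr0;
  last first.
  move=> c ci; apply: big1 => l _.
  by rewrite /path_start col_cons0 (negbTE ci) andbF.
transitivity (\sum_(l : col 'I_k.+1 |
    (i != l ord0) && Defs.proper (l : col (vert (path_graph k))))
    weight l * g (l (path_end k))).
  rewrite [RHS]big_mkcond; apply: eq_bigr => l _.
  by rewrite proper_col_cons /path_start col_cons0 eqxx andbT endS col_consS
             weight_but_col_cons.
rewrite (partition_big (fun l : col 'I_k.+1 => l ord0) (fun j => j != i)); last first.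
  by move=> l /andP[+ _]; rewrite eq_sym.
apply: eq_bigr => j ji; rewrite mulr_sumr.
apply: eq_big => l.
  by case: (eqVneq (l ord0) j) => [->|]; rewrite ?andbF // eq_sym ji.
by move=> /andP[_ /eqP lj]; rewrite (weightE ord0) lj mulrA.
Qed.

Lemma transfer_path k (g : 'I_n -> R) i :
  transfer (path_start k) (path_end k) g i = iter k step g i.
Proof.
elim: k i => [|k IH] i; first exact: transfer_path0.
by rewrite transfer_pathS; apply: eq_bigr => j _; rewrite IH.
Qed.

Lemma rchrom_wedge (S L : rooted_graph) i :
  rchrom (Defs.root (wedge S L)) i =
  rchrom (Defs.root S) i * rchrom (Defs.root L) i.
Proof.
rewrite [LHS]rchrom_glue_l /rchrom mulr_suml.
by apply: eq_bigr => k /andP[_ /eqP ->].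
Qed.

Lemma rchrom_leg k (L : rooted_graph) i :
  rchrom (Defs.root (leg k L)) i = iter k step (rchrom (Defs.root L)) i.
Proof. by rewrite [LHS]rchrom_glue_l -transfer_path. Qed.

Lemma rchrom_K1 i : rchrom (Defs.root K1) i = 1.
Proof.
rewrite -(transfer_path0 (fun=> 1) i); apply: eq_bigr => l _.
by rewrite mulr1.
Qed.

Lemma rchrom_spider_cons k (L : rooted_graph) legs i :
  rchrom (Defs.root (spider ((k, L) :: legs))) i =
  iter k step (rchrom (Defs.root L)) i * rchrom (Defs.root (spider legs)) i.
Proof.
have foldlE (S : rooted_graph) ps :
    rchrom (Defs.root (foldl (fun S p => wedge S (leg p.1 p.2)) S ps)) i =
    rchrom (Defs.root S) i *
    \prod_(p <- ps) iter p.1 step (rchrom (Defs.root p.2)) i.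
  elim: ps S => [|p ps IH] S /=; first by rewrite big_nil mulr1.
  by rewrite IH rchrom_wedge rchrom_leg big_cons mulrA.
by rewrite /spider /= !foldlE rchrom_wedge rchrom_leg rchrom_K1 !mul1r.
Qed.

Lemma chrom_Pk k (G H : rooted_graph) :
  chrom n (Pk k G H) =
  xsum (rchrom (Defs.root G) \* iter k step (rchrom (Defs.root H))).
Proof.
rewrite chrom_glue sum_proper_glue_r.
rewrite (sum_proper_root _ (transfer (path_start k) (path_end k) _)).
by apply: eq_xsum => i /=; rewrite transfer_path.
Qed.

Lemma chrom_pend (G : rooted_graph) k :
  chrom n (pend G k) = xsum (iter k step (rchrom (Defs.root G))).
Proof.
rewrite chrom_Pk xsum_mul_iter_step.
by apply: eq_xsum => i /=; rewrite rchrom_K1 mulr1.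
Qed.

End Chromatic.

Theorem proposition4p1 (t1 t2 : nat) (G1 G2 : rooted_graph)
    (rest : seq (nat * rooted_graph)) :
  (0 < size rest)%N -> (1 <= t1)%N -> (1 <= t2)%N ->
  let G := spider [:: (t1, G1), (t2, G2) & rest] in
  let H := spider rest in
  forall n : nat,
    chrom n G =
      chrom n (spider [:: (t1.-1, G1); (t2, G2); (1%N, H)])
      + chrom n (pend G1 t1.-1) * chrom n (spider ((t2, G2) :: rest))
      - chrom n (Pk (t1 + t2).-1 G1 G2) * chrom n H.
Proof.
move=> _ t1_gt0 _ G H n.
set A := iter t1.-1 (@step n) (rchrom (Defs.root G1)).
set B := iter t2 (@step n) (rchrom (Defs.root G2)).
set h := @rchrom n _ (Defs.root H).
have GE : chrom n G = xsum (step A \* B \* h).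
  rewrite (chrom_rchrom _ (Defs.root _)); apply: eq_xsum => i.
  by rewrite !rchrom_spider_cons /A -iterS prednK //= mulrA.
have splitE : chrom n (spider [:: (t1.-1, G1); (t2, G2); (1%N, H)]) =
              xsum (A \* B \* step h).
  rewrite (chrom_rchrom _ (Defs.root _)); apply: eq_xsum => i.
  by rewrite !rchrom_spider_cons rchrom_K1 /= mulr1 mulrA.
have tailE : chrom n (spider ((t2, G2) :: rest)) = xsum (B \* h).
  rewrite (chrom_rchrom _ (Defs.root _)); apply: eq_xsum => i.
  by rewrite rchrom_spider_cons.
have pathE : chrom n (Pk (t1 + t2).-1 G1 G2) = xsum (A \* B).
  by rewrite -(prednK t1_gt0) addSn chrom_Pk iterD xsum_mul_iter_step.
rewrite GE splitE chrom_pend tailE pathE (chrom_rchrom _ (Defs.root H)).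
exact: xsum_step_mul3.
Qed.
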